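(* Let $n\ge1$ and $I,J\subseteq[n-1]$, complements taken in $[n-1]$. Then (a) $L_{\mathrm{comp}(I)}=\sum_{J\subseteq[n-1]}(-1)^{|J\setminus I|}(\nu-1)^{|I\cap J|}\Pi(\nu)_{\mathrm{comp}(J)}$; (b) $\Pi(\nu)_{\mathrm{comp}(J)}=\sum_{I\subseteq[n-1]}\frac{1}{\nu^{n-1}}(-1)^{|J\setminus I|}(\nu-1)^{|(I\cup J)^c|}L_{\mathrm{comp}(I)}$.
   Context: Fix an integer $\nu>1$; $C_\nu$ is the additive cyclic group of order $\nu$; $Q_n(\nu)=\bigoplus_{i\in[n-1]}C_\nu$. $\psi_\nu(0)=1$, $\psi_\nu(g)=-1/(\nu-1)$ for $g\ne0$. For $I\subseteq[n-1]$, $\dot\chi^I(\nu)(\mathbf g)=\prod_{i\in[n-1]\setminus I}\psi_\nu(g_i)$, and $\kappa_I(\nu)$ is the indicator function of $\{\mathbf g\in Q_n(\nu):\{i:g_i\ne0\}=I\}$. $\mathrm{scf}(\mathcal N_n(\nu))$ is the span of the $\kappa_I(\nu)$, which also has basis $\{\dot\chi^I(\nu)\}$. $\mathrm{comp}(\{s_1<\dots<s_i\})=(s_1,s_2-s_1,\dots,n-s_i)$; $L_{\mathrm{comp}(I)}=\sum_{I\subseteq J\subseteq[n-1]}M_{\mathrm{comp}(J)}$ is the fundamental quasisymmetric function ($M$ the monomial ones). $\mathrm{ch}^n_\nu:\mathrm{scf}(\mathcal N_n(\nu))\to\mathsf{QSym}_n$ is the linear isomorphism $\dot\chi^I(\nu)\mapsto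 L_{\mathrm{comp}(I)}$, and $\Pi(\nu)_{\mathrm{comp}(I)}:=\mathrm{ch}^n_\nu\big(\kappa_I(\nu)/(\nu-1)^{|I|}\big)$. *)

From HB Require Import structures.
From mathcomp Require Import all_boot all_order all_algebra.
Set Implicit Arguments. Unset Strict Implicit. Unset Printing Implicit Defensive.
Import Order.TTheory GRing.Theory Num.Theory.
Local Open Scope ring_scope.

(* [n-1] = {1,...,n-1} is modelled by 'I_(n-1) (positions 0..n-2, shifted by one).
   Subsets I of [n-1] are {set 'I_(n-1)}; comp is a bijection from such subsets to
   compositions of n, so we index QSym_n-objects by the subset I rather than comp(I). *)

(* Q_n(nu) = (+)_{i in [n-1]} C_nu ; 'Z_nu is Z/nu for nu >= 2. *)
Definition Qn (n nu : nat) := {ffun 'I_(n.-1) -> 'Z_nu}.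

(* QSym_n, represented by its coordinates in the monomial basis
   {M_comp(J) : J subset of [n-1]}. *)
Definition QSym (R : numFieldType) (n : nat) := {ffun {set 'I_(n.-1)} -> R^o}.

Definition Mq (R : numFieldType) (n : nat) (J : {set 'I_(n.-1)}) : QSym R n :=
  [ffun K => (K == J)%:R].

Definition Lq (R : numFieldType) (n : nat) (I : {set 'I_(n.-1)}) : QSym R n :=
  \sum_(J : {set 'I_(n.-1)} | I \subset J) Mq R J.

Definition psi (R : numFieldType) (nu : nat) (g : 'Z_nu) : R :=
  if g == 0 then 1 else - (nu%:R - 1)^-1.

Definition chid (R : numFieldType) (n nu : nat) (I : {set 'I_(n.-1)}) : {ffun Qn n nu -> R^o} :=
  [ffun g : Qn n nu => \prod_(i in ~: I) psi R (g i)].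

Definition kappa (R : numFieldType) (n nu : nat) (I : {set 'I_(n.-1)}) : {ffun Qn n nu -> R^o} :=
  [ffun g : Qn n nu => ([set i | g i != 0] == I)%:R].

Definition Pi (R : numFieldType) (n nu : nat)
  (ch : {ffun Qn n nu -> R^o} -> QSym R n) (J : {set 'I_(n.-1)}) : QSym R n :=
  ch (((nu%:R - 1) ^+ #|J|)^-1 *: kappa R nu J).

From HB Require Import structures.
From mathcomp Require Import all_boot all_order all_algebra.
From mathcomp Require Import ring.
Import Order.TTheory GRing.Theory Num.Theory.
Local Open Scope ring_scope.

(* Write q = nu - 1 and S = supp g.  Then psi(g_i) is 1 off S and -1/q on S,
   so both identities are checked pointwise on Q_n(nu).  For (a) the sum over
   J collapses to the single term J = S, leaving (-1/q)^|S \ I|, which is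
   \dot\chi^I at g.  For (b) every summand is a product over i in [n-1] of a
   factor depending only on whether i lies in I, so the sum over I factorises
   into a product over i of a two-term sum; each two-term sum equals the i-th
   factor of q^-|J| [S = J], thanks to q + 1 = nu. *)

Lemma expr_card_mkcond (R : pzSemiRingType) (T : finType) (A : {set T}) (c : R) :
  c ^+ #|A| = \prod_i (if i \in A then c else 1).
Proof. by rewrite -prodr_const big_mkcond. Qed.

Lemma natr_eq_setE (R : comPzSemiRingType) (T : finType) (A B : {set T}) :
  (A == B)%:R = \prod_i ((i \in A) == (i \in B))%:R :> R.
Proof.
have [->|neqAB] := eqVneq A B; first by rewrite big1 // => i _; rewrite eqxx.
have [i Ai_neq] : exists i, (i \in A) != (i \in B).
  apply/existsP; apply: contraNT neqAB => /existsPn eqAB.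
  by apply/eqP/setP => i; apply/eqP/negPn.
by rewrite (bigD1 i) //= (negbTE Ai_neq) mul0r.
Qed.

Lemma ffunZrE (R : pzSemiRingType) (T : finType) (a : R) (f : {ffun T -> R^o}) x :
  (a *: f) x = a * f x.
Proof. by rewrite ffunE. Qed.

Lemma inversion_factor (F : fieldType) (q : F) (b c : bool) :
  q != 0 -> q + 1 != 0 ->
  (q + 1)^-1 * (1 + (if c then -1 else q) * (if b then - q^-1 else 1))
  = (if c then q^-1 else 1) * (b == c)%:R.
Proof. by move=> q_neq0 q1_neq0; case: b; case: c => /=; field; rewrite ?q_neq0. Qed.

Section SuperclassFunctions.
Variables (R : numFieldType) (nu n : nat).
Hypothesis nu_gt1 : (1 < nu)%N.

Local Notation q := (nu%:R - 1 : R).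

Definition supp (g : Qn n nu) : {set 'I_(n.-1)} := [set i | g i != 0].

Lemma nu_neq0 : (nu%:R : R) != 0.
Proof. by rewrite pnatr_eq0 -lt0n ltnW. Qed.

Lemma q_neq0 : q != 0.
Proof. by rewrite subr_eq0 pnatr_eq1 gtn_eqF. Qed.

Lemma psi_supp (g : Qn n nu) i : psi R (g i) = if i \in supp g then - q^-1 else 1.
Proof. by rewrite /psi inE; case: (g i == 0). Qed.

Lemma sum_kappaE (c : {set 'I_(n.-1)} -> R) (g : Qn n nu) :
  (\sum_J c J *: kappa R nu J) g = c (supp g).
Proof.
rewrite sum_ffunE (bigD1 (supp g)) //= big1 ?addr0 => [|J /negbTE neqJ].
  by rewrite ffunZrE ffunE eqxx mulr1.
by rewrite ffunZrE ffunE eq_sym neqJ mulr0.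
Qed.

Lemma chid_kappa (I : {set 'I_(n.-1)}) :
  chid R nu I = \sum_J
     ((-1) ^+ #|J :\: I| * q ^+ #|I :&: J|) *: ((q ^+ #|J|)^-1 *: kappa R nu J).
Proof.
under eq_bigr do rewrite scalerA.
apply/ffunP => g; rewrite sum_kappaE ffunE.
set S := supp g.
have qIS_neq0 : q ^+ #|S :&: I| != 0 by rewrite expf_neq0 // q_neq0.
rewrite -(cardsID I S) setIC exprD invfM mulrA -(mulrA _ (q ^+ _)) divff // mulr1.
rewrite -exprVn -exprNn expr_card_mkcond big_mkcond /=.
by apply: eq_bigr => i _; rewrite psi_supp !inE; case: (i \in I); case: (i \in S).
Qed.

Lemma kappa_chid (J : {set 'I_(n.-1)}) :
  (q ^+ #|J|)^-1 *: kappa R nu J = \sum_I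
     ((nu%:R ^+ n.-1)^-1 * (-1) ^+ #|J :\: I| * q ^+ #|~: (I :|: J)|) *: chid R nu I.
Proof.
apply/ffunP => g; rewrite sum_ffunE ffunZrE ffunE.
pose f i : R := (nu%:R)^-1 * ((if i \in J then -1 else q) * psi R (g i)).
have summandE I : (((nu%:R ^+ n.-1)^-1 * (-1) ^+ #|J :\: I| * q ^+ #|~: (I :|: J)|)
                     *: chid R nu I) g = \prod_i (if i \in I then (nu%:R)^-1 else f i).
  have -> : (nu%:R ^+ n.-1)^-1 = \prod_(i : 'I_n.-1) (nu%:R : R)^-1.
    by rewrite prodr_const card_ord exprVn.
  rewrite ffunZrE ffunE !expr_card_mkcond.
  rewrite [X in _ * X]big_mkcond -!big_split /=.
  apply: eq_bigr => i _; rewrite /f !inE.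
  by case: (i \in I); case: (i \in J); rewrite /= ?mulr1 ?mul1r ?mulrA.
rewrite (eq_bigr _ (fun I _ => summandE I)) -bigA_distr.
rewrite natr_eq_setE -exprVn expr_card_mkcond -big_split /=.
apply: eq_bigr => i _; rewrite -/(supp g) /f -[X in _ = X + _]mulr1 -mulrDr psi_supp.
by rewrite -[X in _ = X^-1 * _](subrK 1) inversion_factor ?subrK ?q_neq0 ?nu_neq0.
Qed.

End SuperclassFunctions.

Theorem lemma4p3 (R : numFieldType) (nu n : nat) (hnu : (1 < nu)%N) (hn : (0 < n)%N)
  (ch : {linear {ffun Qn n nu -> R^o} -> QSym R n})
  (hch : forall I : {set 'I_(n.-1)}, ch (chid R nu I) = Lq R I) :
  (forall I : {set 'I_(n.-1)},
     Lq R I = \sum_(J : {set 'I_(n.-1)})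
                ((-1) ^+ #|J :\: I| * (nu%:R - 1) ^+ #|I :&: J|) *: Pi ch J)
  /\
  (forall J : {set 'I_(n.-1)},
     Pi ch J = \sum_(I : {set 'I_(n.-1)})
                ((nu%:R ^+ n.-1)^-1 * (-1) ^+ #|J :\: I|
                   * (nu%:R - 1) ^+ #|~: (I :|: J)|) *: Lq R I).
Proof.
split.
  move=> I; rewrite -hch (@chid_kappa R nu n hnu) linear_sum.
  by apply: eq_bigr => J _; rewrite linearZ.
move=> J; rewrite /Pi (@kappa_chid R nu n hnu) linear_sum.
by apply: eq_bigr => I _; rewrite linearZ hch.
Qed.
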